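(* Let $q$ be a prime power with $q-1=ds$, where $d\ge 3$ and $s$ are positive integers, let $r_0,r_1$ be positive integers and $a_0,a_1\in\mathbb{F}_q^*$. Let $$f(x)=\frac1d\,(a_0x^{r_0}-a_1x^{r_1})\,(1+x^s+\cdots+x^{(d-1)s})+a_1x^{r_1}.$$ Then $f$ is a permutation polynomial of $\mathbb{F}_q$ if and only if $\gcd(r_0r_1,s)=\gcd(r_1,d)=1$ and $a_0^s=a_1^s$. In this case the inverse of $f$ over $\mathbb{F}_q$ is given by $$f^{-1}(x)=\frac1d\left[\left(\frac{x}{a_0}\right)^{\tilde r_0}-\left(\frac{x}{a_1}\right)^{\tilde r_1}\right]\left[1+\left(\frac{x}{a_1}\right)^s+\cdots+\left(\frac{x}{a_1}\right)^{(d-1)s}\right]+\left(\frac{x}{a_1}\right)^{\tilde r_1+us},$$ where, for $i=0,1$, $\tilde r_i$ is a positive integer inverse of $r_i$ modulo $s$ (i.e. $r_i\tilde r_i\equiv1\pmod s$), $r_1'$ is an inverse of $r_1$ modulo $d$, and $u$ is the integer with $0\le u<d$ and $u\equiv r_1'(1-r_1\tilde r_1)/s\pmod d$.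
   Context: A polynomial $f\in\mathbb{F}_q[x]$ is a permutation polynomial of $\mathbb{F}_q$ if it induces a bijection of $\mathbb{F}_q$. A polynomial $g$ is the inverse of $f$ over $\mathbb{F}_q$ if $g(f(c))=c$ for all $c\in\mathbb{F}_q$. Since $d\mid q-1$, $1/d$ makes sense in $\mathbb{F}_q$. *)

From HB Require Import structures.
From mathcomp Require Import all_boot all_order all_algebra all_field.
Set Implicit Arguments. Unset Strict Implicit. Unset Printing Implicit Defensive.
Import GRing.Theory.
Local Open Scope ring_scope.

Definition perm_poly (F : finFieldType) (p : {poly F}) : Prop :=
  bijective (fun x : F => p.[x]).

Definition cor43_f (F : finFieldType) (d s r0 r1 : nat) (a0 a1 : F) : {poly F} :=
  (d%:R)^-1 *: ((a0 *: 'X^r0 - a1 *: 'X^r1) * \sum_(i < d) 'X^(i * s))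
  + a1 *: 'X^r1.

Definition cor43_g (F : finFieldType) (d s rt0 rt1 u : nat) (a0 a1 : F) : {poly F} :=
  (d%:R)^-1 *: (((a0^-1 *: 'X) ^+ rt0 - (a1^-1 *: 'X) ^+ rt1)
                 * \sum_(i < d) (a1^-1 *: 'X) ^+ (i * s))
  + (a1^-1 *: 'X) ^+ (rt1 + u * s).

From HB Require Import structures.
From mathcomp Require Import all_boot all_order all_algebra all_field.
From mathcomp Require Import ring.
From mathcomp Require cyclic.
Import GRing.Theory.
Local Open Scope ring_scope.

(* For x <> 0 the factor 1 + x^s + ... + x^((d-1)s) equals d when x^s = 1 and
   vanishes otherwise, so f(x) = a0 x^r0 on the s-th roots of unity and
   f(x) = a1 x^r1 off them.  Injectivity on the s-th roots of unity and on the
   cosets x mu_s with x^s <> 1 forces gcd(r0, s) = gcd(r1, s) = 1.  Moreover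
   f(x)^s = phi(x^s), where phi(1) = a0^s and phi(z) = a1^s z^r1 for z <> 1, so a
   bijective f makes phi a permutation of the d-th roots of unity; as d >= 3 this
   gives gcd(r1, d) = 1 and a0^s = a1^s.  Conversely these conditions make f
   injective, and the inverse is checked branch by branch, rt1 + u s being an
   inverse of r1 modulo ds. *)


Section PowersInRings.

Context {R : nzRingType}.
Implicit Types x y z : R.

Lemma expr0n_gt0 n : (0 < n)%N -> 0 ^+ n = 0 :> R.
Proof. by move=> n_gt0; rewrite expr0n gtn_eqF. Qed.

Lemma expr_modn1 {n k x} : x ^+ n = 1 -> (k = 1 %[mod n])%N -> x ^+ k = x.
Proof. by move=> xn1 k1; rewrite -(expr_mod k xn1) k1 expr_mod ?expr1. Qed.

Lemma expr_coprime_eq1 {m n z} :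
  coprime m n -> (0 < n)%N -> z ^+ m = 1 -> z ^+ n = 1 -> z = 1.
Proof.
move=> /eqP co_mn n_gt0 zm zn; have [a _ /dvdnP [k Bezout]] := Bezoutr m n_gt0.
have : z ^+ (gcdn m n + a * m) = 1 by rewrite Bezout mulnC exprM zn expr1n.
by rewrite co_mn exprD mulnC exprM zm expr1n mulr1 expr1.
Qed.

Lemma coprime_of_expr_kernel {m k z} : m.-primitive_root z ->
  (forall y, y ^+ m = 1 -> y ^+ k = 1 -> y = 1) -> coprime k m.
Proof.
move=> z_prim ker1; have zk_prim := exp_prim_root z_prim k.
have /eqP : z ^+ (m %/ gcdn k m) = 1.
  apply: ker1; rewrite exprAC.
    by rewrite (prim_expr_order z_prim) expr1n.
  by rewrite (prim_expr_order zk_prim).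
rewrite -(prim_order_dvd z_prim) dvdn_divRL ?dvdn_gcdr //.
by rewrite -[X in (_ %| X)%N]muln1 dvdn_pmul2l ?dvdn1 ?(prim_order_gt0 z_prim).
Qed.

End PowersInRings.

Lemma expr_inj_coprime {F : fieldType} {k n : nat} {x y : F} :
  coprime k n -> (0 < n)%N -> y != 0 -> x ^+ k = y ^+ k -> x ^+ n = y ^+ n -> x = y.
Proof.
move=> co_kn n_gt0 y_neq0 xyk xyn.
suff /(canRL (divfK y_neq0)) : x / y = 1 by rewrite mul1r.
by apply: (expr_coprime_eq1 co_kn n_gt0); rewrite expr_div_n ?xyk ?xyn divff ?expf_neq0.
Qed.

Lemma unity_root_mean_sum (F : fieldType) (d : nat) (z c : F) :
  d%:R != 0 :> F -> z ^+ d = 1 ->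
  d%:R^-1 * c * \sum_(i < d) z ^+ i = if z == 1 then c else 0.
Proof.
move=> d_neq0 zd; have [->|z_neq1] := eqVneq z 1.
  under eq_bigr do rewrite expr1n.
  by rewrite sumr_const card_ord -mulr_natr mulrAC mulVf ?mul1r.
have /eqP : (z - 1) * \sum_(i < d) z ^+ i = 0 by rewrite -subrX1 zd subrr.
by rewrite mulf_eq0 subr_eq0 (negbTE z_neq1) => /eqP->; rewrite mulr0.
Qed.

Lemma lift_modn_inverse (d s r rt r' u : nat) :
  (r * rt = 1 %[mod s])%N -> (r * r' = 1 %[mod d])%N ->
  (u%:Z = r'%:Z * divz (1 - (r * rt)%:Z) s%:Z %[mod d%:Z])%Z ->
  (r * (rt + u * s) = 1 %[mod d * s])%N.
Proof.
move=> rrt1 rr'1 u_def; set t := divz _ _ in u_def.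
have s_dvd : (s%:Z %| 1 - (r * rt)%:Z)%Z.
  by rewrite -eqz_mod_dvd; apply/eqP; rewrite !modz_nat rrt1.
have /dvdzP [a u_eq] : (d%:Z %| u%:Z - r'%:Z * t)%Z by rewrite -eqz_mod_dvd u_def.
have /dvdzP [b r'_eq] : (d%:Z %| (r * r')%:Z - 1)%Z.
  by rewrite -eqz_mod_dvd; apply/eqP; rewrite !modz_nat rr'1.
have t_eq : t * s%:Z = 1 - (r * rt)%:Z by rewrite divzK.
suff : ((r * (rt + u * s))%:Z = 1 %[mod (d * s)%:Z])%Z by rewrite !modz_nat => -[].
apply/eqP; rewrite eqz_mod_dvd; apply/dvdzP; exists (r%:Z * a + b * t).
(* r (rt + u s) - 1 = (r u - t) s and r u - t = r (u - r' t) + (r r' - 1) t. *)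
have -> : (r * (rt + u * s))%:Z - 1 =
    (r%:Z * (u%:Z - r'%:Z * t) + ((r * r')%:Z - 1) * t) * s%:Z.
  transitivity (r%:Z * u%:Z * s%:Z - t * s%:Z); last by rewrite PoszM; ring.
  by rewrite t_eq !PoszM PoszD PoszM; ring.
by rewrite u_eq r'_eq PoszM; ring.
Qed.

Section FiniteFields.

Variable F : finFieldType.

Lemma expf_card_pred (x : F) : x != 0 -> x ^+ #|F|.-1 = 1.
Proof.
move=> x_neq0; apply: (mulIf x_neq0).
by rewrite mul1r -exprSr (ltn_predK (finNzRing_gt1 F)) expf_card.
Qed.

Lemma finField_prim_root : exists w : F, (#|F|.-1).-primitive_root w.
Proof.
have : has (#|F|.-1).-primitive_root (enum (predC1 (0 : F))).
  apply: cyclic.has_prim_root; last by rewrite -cardE cardC1.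
  - by rewrite -(cardC1 (0 : F)); apply/card_gt0P; exists 1; rewrite !inE oner_neq0.
  - by apply/allP => x; rewrite mem_enum => /expf_card_pred /unity_rootP.
  - exact: enum_uniq.
by case/hasP => w _; exists w.
Qed.

End FiniteFields.

Section Corollary43.

Variables (F : finFieldType) (d s r0 r1 : nat) (a0 a1 : F).
Hypotheses (card_F : #|F|.-1 = (d * s)%N) (s_gt0 : (0 < s)%N).
Hypotheses (r0_gt0 : (0 < r0)%N) (r1_gt0 : (0 < r1)%N).
Hypotheses (a0_neq0 : a0 != 0) (a1_neq0 : a1 != 0).

Local Notation f := (cor43_f d s r0 r1 a0 a1).

Lemma natr_cofactor_neq0 : d%:R != 0 :> F.
Proof.
have [w w_prim] := finField_prim_root F.
by apply: (prim_root_dvd_eq0 w_prim); rewrite card_F dvdn_mulr.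
Qed.

Lemma cofactor_gt0 : (0 < d)%N.
Proof. by rewrite lt0n; apply: contraNneq natr_cofactor_neq0 => ->. Qed.

Lemma exprs_unity (x : F) : x != 0 -> (x ^+ s) ^+ d = 1.
Proof. by move/expf_card_pred; rewrite card_F mulnC exprM. Qed.

Lemma cor43_fE x : f.[x] = if x ^+ s == 1 then a0 * x ^+ r0 else a1 * x ^+ r1.
Proof.
rewrite /cor43_f hornerD !hornerZ hornerM horner_sum hornerD hornerN !hornerZ !hornerXn.
under eq_bigr do rewrite hornerXn mulnC exprM.
have [->|x_neq0] := eqVneq x 0.
  by rewrite !expr0n_gt0 // !mulr0 subrr mul0r mulr0 add0r if_same.
rewrite mulrA unity_root_mean_sum ?natr_cofactor_neq0 ?exprs_unity //.
by case: eqP => _; rewrite ?subrK ?add0r.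
Qed.

Lemma cor43_f0 : f.[0] = 0.
Proof. by rewrite cor43_fE !expr0n_gt0 // !mulr0 if_same. Qed.

Lemma cor43_perm_of_conditions :
  coprime (r0 * r1) s -> coprime r1 d -> a0 ^+ s = a1 ^+ s -> perm_poly f.
Proof.
rewrite coprimeMl => /andP[co_r0s co_r1s] co_r1d a0a1s.
have cross_coset x y : x ^+ s = 1 -> a0 * x ^+ r0 = a1 * y ^+ r1 -> y ^+ s = 1.
  move=> xs1 /(congr1 (fun t => t ^+ s)).
  rewrite !exprMn exprAC xs1 expr1n mulr1 a0a1s -{1}[a1 ^+ s]mulr1 exprAC.
  move=> /(mulfI (expf_neq0 _ a1_neq0)) /esym ysr1.
  have y_neq0 : y != 0.
    by apply: contra_eq_neq ysr1 => ->; rewrite !expr0n_gt0 // eq_sym oner_neq0.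
  exact: (expr_coprime_eq1 co_r1d cofactor_gt0 ysr1 (exprs_unity _ y_neq0)).
apply: (@injF_bij _ (fun x => f.[x])) => x y /=; rewrite !cor43_fE.
case: ifPn => [/eqP xs1|xs_ne1]; case: ifPn => [/eqP ys1|ys_ne1].
- move=> /(mulfI a0_neq0) xyr0; apply: (expr_inj_coprime co_r0s) => //.
    by apply: contra_eq_neq ys1 => ->; rewrite expr0n_gt0 // eq_sym oner_neq0.
  by rewrite xs1 ys1.
- by move=> /(cross_coset _ _ xs1) /eqP; rewrite (negbTE ys_ne1).
- by move=> /esym /(cross_coset _ _ ys1) /eqP; rewrite (negbTE xs_ne1).
move=> /(mulfI a1_neq0) xyr1; have [y0|y_neq0] := eqVneq y 0.
  by move: xyr1; rewrite y0 expr0n_gt0 // => /eqP; rewrite expf_eq0 r1_gt0 => /eqP.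
have x_neq0 : x != 0 by move: (expf_neq0 r1 y_neq0); rewrite -xyr1 expf_eq0 r1_gt0.
apply: (expr_inj_coprime co_r1s s_gt0 y_neq0 xyr1).
apply: (expr_inj_coprime co_r1d cofactor_gt0 (expf_neq0 _ y_neq0)).
  by rewrite exprAC xyr1 exprAC.
by rewrite !exprs_unity.
Qed.

Section Necessity.

Hypotheses (d_ge3 : (3 <= d)%N) (f_bij : perm_poly f).

Let w := xchoose (finField_prim_root F).

Let w_prim : (d * s).-primitive_root w.
Proof. by rewrite -card_F; apply: xchooseP. Qed.

Let w_neq0 : w != 0.
Proof. by rewrite (prim_root_eq0 w_prim) muln_eq0 negb_or -!lt0n cofactor_gt0. Qed.

Let ws_prim : d.-primitive_root (w ^+ s).
Proof. by rewrite -[s](mulKn s cofactor_gt0) dvdn_prim_root // dvdn_mulr. Qed.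

Let wd_prim : s.-primitive_root (w ^+ d).
Proof. by rewrite -[d](mulnK d s_gt0) dvdn_prim_root // dvdn_mull. Qed.

Lemma cor43_coprime_r0_s : coprime r0 s.
Proof.
apply: (coprime_of_expr_kernel wd_prim) => y ys1 yr01.
by apply: (bij_inj f_bij) => /=; rewrite !cor43_fE ys1 yr01 !expr1n eqxx.
Qed.

Lemma cor43_coprime_r1_s : coprime r1 s.
Proof.
apply: (coprime_of_expr_kernel wd_prim) => y ys1 yr11.
have ws_neq1 : w ^+ s != 1.
  by rewrite -(prim_order_dvd w_prim) gtnNdvd // ltn_Pmull // ltnW.
apply: (mulfI w_neq0); rewrite mulr1; apply: (bij_inj f_bij) => /=.
by rewrite !cor43_fE exprMn ys1 mulr1 (negbTE ws_neq1) exprMn yr11 mulr1.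
Qed.

Let phi z := if z == 1 then a0 ^+ s else a1 ^+ s * z ^+ r1.

Let mu_d := [set z : F | z ^+ d == 1].

Let cor43_f_exprs x : f.[x] ^+ s = phi (x ^+ s).
Proof.
rewrite cor43_fE /phi; case: ifP => [/eqP xs1|_]; rewrite exprMn exprAC //.
by rewrite xs1 expr1n mulr1.
Qed.

Let mu_d_sub_image : mu_d \subset phi @: mu_d.
Proof.
apply/subsetP => t; rewrite inE => /eqP td1.
have [i ->] := prim_rootP ws_prim td1; have [finv fK finvK] := f_bij.
have x_neq0 : finv (w ^+ i) != 0.
  by apply: contra_eq_neq (finvK (w ^+ i)) => /= ->; rewrite cor43_f0 eq_sym expf_neq0.
rewrite exprAC -[w ^+ i]finvK cor43_f_exprs.
by apply: imset_f; rewrite inE exprs_unity.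
Qed.

Let phi_inj : {in mu_d &, injective phi}.
Proof.
by apply/imset_injP; rewrite eqn_leq leq_imset_card subset_leq_card ?mu_d_sub_image.
Qed.

Let kernel_d (y : F) : y ^+ d = 1 -> y ^+ r1 = 1 -> y = 1.
Proof.
move=> yd1 yr11; pose e := w ^+ s; have d_gt1 : (1 < d)%N := ltnW d_ge3.
have e_neq1 k : (0 < k < d)%N -> e ^+ k != 1.
  by case/andP=> k_gt0 k_lt_d; rewrite -(prim_order_dvd ws_prim) gtnNdvd.
(* Since d >= 3, some e^k <> 1 has e^k y <> 1, and phi agrees with z |-> a1^s z^r1 at both. *)
have [k [k_gt0 k_lt_d eky_neq1]] : exists k, [/\ (0 < k)%N, (k < d)%N & e ^+ k * y != 1].
  have [ey1|ey_neq1] := eqVneq (e * y) 1; [exists 2%N | exists 1%N]; split => //.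
  by rewrite expr2 -mulrA ey1 mulr1 -[e]expr1 e_neq1 //= d_gt1.
have ekd1 : (e ^+ k) ^+ d = 1 by rewrite exprAC (prim_expr_order ws_prim) expr1n.
apply: (mulfI (expf_neq0 k (expf_neq0 s w_neq0))); rewrite mulr1.
apply: phi_inj; rewrite ?inE ?exprMn ?ekd1 ?yd1 ?mulr1 //.
by rewrite /phi (negbTE eky_neq1) (negbTE (e_neq1 _ _)) ?k_gt0 ?k_lt_d // exprMn yr11 mulr1.
Qed.

Lemma cor43_coprime_r1_d : coprime r1 d.
Proof. exact: coprime_of_expr_kernel ws_prim kernel_d. Qed.

Lemma cor43_exprs_eq : a0 ^+ s = a1 ^+ s.
Proof.
have /(subsetP mu_d_sub_image) : a1 ^+ s \in mu_d by rewrite inE exprs_unity.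
case/imsetP => z; rewrite inE /phi => /eqP zd1; case: eqP => [_ -> //|/eqP z_neq1].
rewrite -{1}[a1 ^+ s]mulr1 => /(mulfI (expf_neq0 _ a1_neq0)) /esym zr11.
by move: z_neq1; rewrite (kernel_d _ zd1 zr11) eqxx.
Qed.

Lemma cor43_conditions_of_perm :
  [/\ coprime (r0 * r1) s, coprime r1 d & a0 ^+ s = a1 ^+ s].
Proof.
by rewrite coprimeMl cor43_coprime_r0_s cor43_coprime_r1_s cor43_coprime_r1_d cor43_exprs_eq.
Qed.

End Necessity.

Section Inverse.

Variables (rt0 rt1 u : nat).
Hypotheses (rt0_gt0 : (0 < rt0)%N) (rt1_gt0 : (0 < rt1)%N).

Local Notation g := (cor43_g d s rt0 rt1 u a0 a1).

Lemma cor43_gE y : g.[y] =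
  if (a1^-1 * y) ^+ s == 1 then (a0^-1 * y) ^+ rt0 else (a1^-1 * y) ^+ (rt1 + u * s).
Proof.
rewrite /cor43_g hornerD !hornerZ hornerM horner_sum hornerD hornerN.
rewrite !horner_exp !hornerZ hornerX.
under eq_bigr do rewrite horner_exp hornerZ hornerX mulnC exprM.
have [->|y_neq0] := eqVneq y 0.
  have rt1us_gt0 : (0 < rt1 + u * s)%N by rewrite addn_gt0 rt1_gt0.
  by rewrite !mulr0 !expr0n_gt0 // subrr mul0r mulr0 add0r if_same.
rewrite mulrA unity_root_mean_sum ?natr_cofactor_neq0 ?exprs_unity ?mulf_neq0 ?invr_eq0 //.
case: eqP => [zs1|_]; last by rewrite add0r.
by rewrite exprD mulnC exprM zs1 expr1n mulr1 subrK.
Qed.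

Lemma cor43_gK : coprime r1 d -> a0 ^+ s = a1 ^+ s ->
  (r0 * rt0 = 1 %[mod s])%N -> (r1 * (rt1 + u * s) = 1 %[mod d * s])%N ->
  forall c, g.[f.[c]] = c.
Proof.
move=> co_r1d a0a1s r0rt0 r1rt1 c; have [->|c_neq0] := eqVneq c 0.
  have rt1us_gt0 : (0 < rt1 + u * s)%N by rewrite addn_gt0 rt1_gt0.
  by rewrite cor43_f0 cor43_gE !mulr0 !expr0n_gt0 // if_same.
rewrite cor43_fE; case: ifPn => [/eqP cs1|cs_neq1]; rewrite cor43_gE.
  have -> : (a1^-1 * (a0 * c ^+ r0)) ^+ s = 1.
    by rewrite mulrA !exprMn exprAC cs1 expr1n mulr1 exprVn a0a1s mulVf ?expf_neq0.
  by rewrite eqxx mulKf // -exprM (expr_modn1 cs1 r0rt0).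
have crs_neq1 : (c ^+ r1) ^+ s != 1.
  apply: contra cs_neq1 => /eqP; rewrite exprAC => csr1.
  by rewrite (expr_coprime_eq1 co_r1d cofactor_gt0 csr1 (exprs_unity _ c_neq0)).
rewrite mulKf // (negbTE crs_neq1) -exprM (expr_modn1 _ r1rt1) //.
by rewrite -card_F expf_card_pred.
Qed.

End Inverse.

End Corollary43.

Theorem corollary4p3 (F : finFieldType) (d s r0 r1 : nat) (a0 a1 : F) :
  (#|F|.-1 = d * s)%N -> (3 <= d)%N -> (0 < s)%N ->
  (0 < r0)%N -> (0 < r1)%N -> a0 != 0 -> a1 != 0 ->
  (perm_poly (cor43_f d s r0 r1 a0 a1) <->
     [/\ gcdn (r0 * r1) s = 1%N, gcdn r1 d = 1%N & a0 ^+ s = a1 ^+ s])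
  /\
  (perm_poly (cor43_f d s r0 r1 a0 a1) ->
   forall rt0 rt1 r1' u : nat,
     (0 < rt0)%N -> (0 < rt1)%N ->
     (r0 * rt0 = 1 %[mod s])%N -> (r1 * rt1 = 1 %[mod s])%N ->
     (r1 * r1' = 1 %[mod d])%N ->
     (u < d)%N ->
     ((u%:Z = r1'%:Z * (divz (1 - (r1 * rt1)%:Z) s%:Z) %[mod d%:Z])%Z) ->
     forall c : F, (cor43_g d s rt0 rt1 u a0 a1).[(cor43_f d s r0 r1 a0 a1).[c]] = c).
Proof.
move=> card_F d_ge3 s_gt0 r0_gt0 r1_gt0 a0_neq0 a1_neq0.
have necessary : perm_poly (cor43_f d s r0 r1 a0 a1) ->
    [/\ coprime (r0 * r1) s, coprime r1 d & a0 ^+ s = a1 ^+ s].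
  by move=> f_bij; apply: cor43_conditions_of_perm.
split; first split.
- by case/necessary => /eqP co_r01s /eqP co_r1d a0a1s.
- by case=> /eqP co_r01s /eqP co_r1d a0a1s; apply: cor43_perm_of_conditions.
move=> /necessary [_ co_r1d a0a1s] rt0 rt1 r1' u rt0_gt0 rt1_gt0 r0rt0 r1rt1 r1r1' _ u_def.
by apply: cor43_gK => //; apply: lift_modn_inverse r1rt1 r1r1' u_def.
Qed.
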